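(* Let $p,q$ be positive integers with $p/q\ge2$, let $G$ be a connected graph with a fixed orientation, and let $f,g$ be two $(p,q)$-colourings of $G$. Then there is a sequence of $(p,q)$-colourings $f=f_0,f_1,\dots,f_n$, each obtained from its predecessor by a vertex set recolouring, such that for some constant $k$ we have $f_n(v)\equiv g(v)+k\pmod p$ for all vertices $v$, if and only if $\varphi_f(C)=\varphi_g(C)$ for every cycle $C$ of $G$.
   Context: A $(p,q)$-colouring of $G$ is a map $f:V(G)\to\{0,\dots,p-1\}$ with $q\le|f(u)-f(v)|\le p-q$ for every edge $uv$. For a fixed orientation $\overrightarrow{G}$, $\varphi_f(e)=f(v)-f(u)\bmod p$ for each arc $e=\overrightarrow{uv}$. For a cycle $C$ with a chosen traversal direction, with $C^+$ the edges oriented along the traversal and $C^-$ the others, $\varphi_f(C)=\sum_{e\in C^+}\varphi_f(e)+\sum_{e\in C^-}(p-\varphi_f(e))$ (in $\mathbb{Z}$). For $\emptyset\ne X\subsetneq V(G)$ let $\partial^+(X)$ (resp. $\partial^-(X)$) be the arcs from $X$ to $V(G)\setminus X$ (resp. from $V(G)\setminus X$ to $X$). A vertex set recolouring of $f$ (recolouring $X$ by $\alpha$), for $\emptyset\neq X\subsetneq V(G)$ and an integer $1\le\alpha\le p-1$ with $\varphi_f(e)\ge q+\alpha$ for all $e\in\partial^+(X)$ and $\varphi_f(e)\le p-q-\alpha$ for all $e\in\partial^-(X)$, produces the colouring $f'$ with $f'(v)=f(v)+\alpha\bmod p$ for $v\in X$ and $f'(v)=f(v)$ otherwise. *)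

From mathcomp Require Import all_boot.
Set Implicit Arguments. Unset Strict Implicit. Unset Printing Implicit Defensive.

Section PQ.
Variables (V : finType) (p q : nat).

Definition distn (a b : nat) : nat := maxn a b - minn a b.

Definition is_pq_col (e : rel V) (f : V -> nat) : Prop :=
  (forall v, f v < p) /\
  (forall u v, e u v -> q <= distn (f u) (f v) /\ distn (f u) (f v) <= p - q).

(* phi_f(u->v) = f(v) - f(u) mod p, for an arc u -> v (f u < p) *)
Definition phiA (f : V -> nat) (u v : V) : nat := (f v + p - f u) %% p.

(* contribution of the traversal step x -> y of a cycle, orientation o:
   phi_f(e) if the arc is x -> y (e in C^+), p - phi_f(e) if it is y -> x (C^-) *)
Definition phi_step (o : rel V) (f : V -> nat) (x y : V) : nat :=
  if o x y then phiA f x y else p - phiA f y x.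

(* a cycle of G given as its cyclic sequence of distinct vertices,
   in the chosen traversal direction *)
Definition is_cycle (e : rel V) (c : seq V) : bool :=
  [&& uniq c, 2 < size c & cycle e c].

Definition phiC (o : rel V) (f : V -> nat) (c : seq V) : nat :=
  \sum_(xy <- zip c (rot 1 c)) phi_step o f xy.1 xy.2.

Definition vs_recolouring (o : rel V) (f f' : V -> nat) : Prop :=
  exists (X : {set V}) (alpha : nat),
    [/\ X != set0, X != setT & 1 <= alpha <= p.-1] /\
    [/\ (forall u v, o u v -> u \in X -> v \notin X -> q + alpha <= phiA f u v),
     (forall u v, o u v -> u \notin X -> v \in X -> phiA f u v + q + alpha <= p) &
     (forall v, f' v = if v \in X then (f v + alpha) %% p else f v)].

End PQ.

(* A vertex set recolouring of X by alpha raises phi by alpha on the arcs entering X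
   and lowers it by alpha on the arcs leaving X; a cycle enters X as often as it
   leaves it, so phi(C) is invariant, and so it is under a global shift of colours.
   Conversely, if phi_f and phi_g agree on every cycle, then phi_f - phi_g sums to
   zero around every closed walk, hence equals h(v) - h(u) on each arc uv for some
   potential h.  While h is not constant, pick u below the maximum of h and recolour
   X = {w | h w <= h u} by 1: arcs leave X only where phi_f exceeds phi_g, and enter
   it only where phi_f falls short of phi_g, which leaves exactly the room the
   recolouring needs.  This replaces h by h + [X], so the total gap from h to a fixed
   upper bound drops; once h is constant, f differs from g by a constant modulo p. *)

From mathcomp Require Import all_boot all_algebra zify.
Set Implicit Arguments. Unset Strict Implicit. Unset Printing Implicit Defensive.
Import GRing.Theory.

Lemma not_uniq_split (T : eqType) (s : seq T) :
  ~~ uniq s -> exists y s1 s2 s3, s = s1 ++ y :: s2 ++ y :: s3.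
Proof.
elim: s => [|x s IHs] //=; rewrite negb_and negbK => /orP[/splitPr[s2 s3] | /IHs].
  by exists x, [::], s2, s3.
by case=> y [s1 [s2 [s3 ->]]]; exists y, (x :: s1), s2, s3.
Qed.

Lemma path_rcons_zip (T : Type) (r : rel T) x y s :
  path r x (rcons s y) = all (fun xy => r xy.1 xy.2) (zip (x :: s) (rcons s y)).
Proof. by elim: s x => [|z s IHs] x //=; rewrite IHs. Qed.

Lemma cycle_zip (T : Type) (r : rel T) c :
  cycle r c = all (fun xy => r xy.1 xy.2) (zip c (rot 1 c)).
Proof. by case: c => [|x s] //=; rewrite rot1_cons path_rcons_zip. Qed.

Lemma big_zip_rot1_fst (T : Type) (F : T -> nat) c :
  \sum_(xy <- zip c (rot 1 c)) F xy.1 = \sum_(x <- c) F x.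
Proof. by rewrite -[in RHS](unzip1_zip (eq_leq (esym (size_rot 1 c)))) big_map. Qed.

Lemma big_zip_rot1_snd (T : eqType) (F : T -> nat) c :
  \sum_(xy <- zip c (rot 1 c)) F xy.2 = \sum_(x <- c) F x.
Proof.
rewrite -(perm_big _ (permEl (perm_rot 1 c))) /=.
by rewrite -[in RHS](unzip2_zip (eq_leq (size_rot 1 c))) big_map.
Qed.

Section ArcDifferences.
Variables (V : finType) (p : nat).
Implicit Types (F G : V -> nat) (o : rel V).

Lemma phiA_lt F u v : 0 < p -> phiA p F u v < p.
Proof. exact: ltn_pmod. Qed.

Lemma phiA_addr F u v : F u < p -> phiA p F u v + F u = F v %[mod p].
Proof.
move=> Fu_lt; rewrite modnDml (_ : F v + p - F u + F u = F v + p); last by lia.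
by rewrite modnDr.
Qed.

Lemma phiA_eq F u v r : F u < p -> r < p -> r + F u = F v %[mod p] -> phiA p F u v = r.
Proof.
move=> Fu_lt r_lt r_cong; rewrite -(modn_small r_lt) /phiA; apply/eqP.
rewrite -(eqn_modDr (F u)) (_ : F v + p - F u + F u = F v + p); last by lia.
by rewrite modnDr r_cong.
Qed.

Lemma phiA_transfer F G u v a b r :
  F u < p -> G u < p -> G u = F u + a %[mod p] -> G v = F v + b %[mod p] ->
  r < p -> phiA p F u v + b = r + a -> phiA p G u v = r.
Proof.
move=> Fu_lt Gu_lt Gu Gv r_lt r_def; apply: phiA_eq => //.
rewrite -modnDmr Gu modnDmr (_ : r + (F u + a) = phiA p F u v + F u + b); last by lia.
by rewrite -modnDml phiA_addr // modnDml Gv.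
Qed.

Lemma phiC_shift o F G k c : (forall w, F w < p) -> (forall w, G w < p) ->
  (forall w, G w = F w + k %[mod p]) -> phiC p o G c = phiC p o F c.
Proof.
move=> F_lt G_lt G_shift.
have phiA_G u v : phiA p G u v = phiA p F u v.
  by apply: (phiA_transfer (a := k) (b := k)) => //; apply: phiA_lt; have := F_lt u; lia.
by apply: eq_bigr => xy _; rewrite /phi_step !phiA_G.
Qed.

Lemma phi_step_addr o F x y : F x < p -> F y < p -> phi_step p o F x y + F x = F y %[mod p].
Proof.
move=> Fx_lt Fy_lt; rewrite /phi_step; case: ifP => _; first exact: phiA_addr.
have phi_lt : phiA p F y x < p by apply: phiA_lt; lia.
rewrite -modnDmr -(phiA_addr x Fy_lt) modnDmr.
by rewrite (_ : p - _ + _ = F y + p); [rewrite modnDr | lia].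
Qed.

End ArcDifferences.

Section Recolouring.
Variables (V : finType) (e o : rel V) (p q : nat).
Hypothesis o_edge : forall u v, e u v = o u v || o v u.

Lemma distnC a b : distn a b = distn b a.
Proof. by rewrite /distn maxnC minnC. Qed.

Lemma distn_phiA a b : a < p -> b < p ->
  (q <= distn a b <= p - q) = (q <= (b + p - a) %% p <= p - q).
Proof.
move=> a_lt b_lt; rewrite /distn; case: (leqP a b) => ab.
  by rewrite (_ : b + p - a = b - a + p) ?modnDr ?modn_small; lia.
by rewrite modn_small; [apply/idP/idP => /andP[? ?]; apply/andP; split|]; lia.
Qed.

Lemma pq_colP F : is_pq_col p q e F <->
  (forall v, F v < p) /\ (forall u v, o u v -> q <= phiA p F u v <= p - q).
Proof.
split=> [[F_lt F_edge] | [F_lt F_arc]]; split=> // u v.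
  by move=> uv; rewrite /phiA -distn_phiA //; apply/andP/F_edge; rewrite o_edge uv.
rewrite o_edge => /orP[uv | vu]; apply/andP.
  by rewrite distn_phiA //; apply: F_arc.
by rewrite distnC distn_phiA //; apply: F_arc.
Qed.

Section VertexSetRecolouring.
Variables (F F' : V -> nat) (X : {set V}) (al : nat).
Hypotheses (q_pos : 0 < q) (F_lt : forall w, F w < p)
  (out_arc : forall u v, o u v -> u \in X -> v \notin X -> q + al <= phiA p F u v)
  (in_arc : forall u v, o u v -> u \notin X -> v \in X -> phiA p F u v + q + al <= p)
  (F'_def : forall w, F' w = if w \in X then (F w + al) %% p else F w).

Lemma recoloured_lt w : F' w < p.
Proof. by rewrite F'_def; case: ifP => _; rewrite ?ltn_pmod //; have := F_lt w; lia. Qed.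

Lemma recoloured_cong w : F' w = F w + al * (w \in X) %[mod p].
Proof. by rewrite F'_def; case: ifP => _; rewrite ?modn_mod ?muln1 ?muln0 ?addn0. Qed.

Lemma phiA_recoloured u v : o u v ->
  phiA p F' u v + al * (u \in X) = phiA p F u v + al * (v \in X).
Proof.
move=> uv; set r := phiA p F u v + al * (v \in X) - al * (u \in X).
have phi_lt := phiA_lt F u v (leq_ltn_trans (leq0n _) (F_lt u)).
have [r_lt r_def] : r < p /\ phiA p F u v + al * (v \in X) = r + al * (u \in X).
  rewrite /r; case Xu: (u \in X); case Xv: (v \in X); rewrite /= ?muln0 ?muln1.
  - by lia.
  - by have := out_arc uv Xu (negbT Xv); lia.
  - by have := in_arc uv (negbT Xu) Xv; lia.
  - by lia.
by rewrite (phiA_transfer (F_lt u) (recoloured_lt u) (recoloured_cong u) (recoloured_cong v) r_lt r_def).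
Qed.

Lemma phi_step_recoloured x y : e x y ->
  phi_step p o F' x y + al * (x \in X) = phi_step p o F x y + al * (y \in X).
Proof.
move=> xy; rewrite /phi_step; case: ifP => oxy; first exact: phiA_recoloured.
have oyx : o y x by move: xy; rewrite o_edge oxy.
have p_pos : 0 < p by have := F_lt x; lia.
have := phiA_recoloured oyx; have := phiA_lt F' y x p_pos; have := phiA_lt F y x p_pos.
by lia.
Qed.

Lemma phiC_recoloured c : cycle e c -> phiC p o F' c = phiC p o F c.
Proof.
move=> c_cyc; set mark := fun x => al * (x \in X).
have : \sum_(xy <- zip c (rot 1 c)) (phi_step p o F' xy.1 xy.2 + mark xy.1)
     = \sum_(xy <- zip c (rot 1 c)) (phi_step p o F xy.1 xy.2 + mark xy.2).
  apply: eq_big_seq => xy xy_in; apply: phi_step_recoloured.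
  by move: c_cyc; rewrite cycle_zip => /allP; apply.
by rewrite !big_split /= big_zip_rot1_fst big_zip_rot1_snd => /addIn.
Qed.

End VertexSetRecolouring.

Lemma vs_recolouring_col F F' : 0 < q ->
  is_pq_col p q e F -> vs_recolouring p q o F F' -> is_pq_col p q e F'.
Proof.
move=> q_pos /pq_colP[F_lt F_arc] [X [al [_ [out_arc in_arc F'_def]]]].
apply/pq_colP; split=> [|u v uv]; first exact: recoloured_lt.
have := phiA_recoloured q_pos F_lt out_arc in_arc F'_def uv.
have := F_arc u v uv; have := out_arc u v uv; have := in_arc u v uv.
by case: (u \in X); case: (v \in X) => /= in_uv out_uv; lia.
Qed.

Lemma vs_recolouring_phiC F F' c : 0 < q -> (forall w, F w < p) ->
  vs_recolouring p q o F F' -> cycle e c -> phiC p o F' c = phiC p o F c.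
Proof.
move=> q_pos F_lt [X [al [_ [out_arc in_arc F'_def]]]].
exact: (phiC_recoloured q_pos F_lt out_arc in_arc F'_def).
Qed.

End Recolouring.

Definition dphi (V : finType) (p : nat) (o : rel V) (F G : V -> nat) (x y : V) : int :=
  ((phi_step p o F x y)%:Z - (phi_step p o G x y)%:Z)%R.

Definition is_potential (V : finType) (e : rel V) (p : nat) (o : rel V) (F G : V -> nat)
  (h : V -> int) : Prop :=
  forall u v, e u v -> (h v - h u)%R = dphi p o F G u v.

Section Potential.
Variables (V : finType) (e o : rel V) (p : nat) (f g : V -> nat).
Hypotheses (p_pos : 0 < p) (e_irr : irreflexive e)
  (e_conn : forall u v, connect e u v)
  (o_edge : forall u v, e u v = o u v || o v u)
  (o_anti : forall u v, ~~ (o u v && o v u))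
  (phiC_fg : forall c, is_cycle e c -> phiC p o f c = phiC p o g c).

Local Open Scope ring_scope.

Lemma phi_step_sym F x y : e x y -> (phi_step p o F x y + phi_step p o F y x)%N = p.
Proof.
rewrite /phi_step o_edge; have := o_anti x y.
have := phiA_lt F x y p_pos; have := phiA_lt F y x p_pos.
by case: (o x y); case: (o y x) => //=; lia.
Qed.

Lemma dphi_sym x y : e x y -> dphi p o f g x y + dphi p o f g y x = 0.
Proof. by move=> xy; rewrite /dphi; have := phi_step_sym f xy; have := phi_step_sym g xy; lia. Qed.

Fixpoint walk_dphi x s : int :=
  if s is y :: s' then dphi p o f g x y + walk_dphi y s' else 0.

Lemma walk_dphi_cat x s1 s2 :
  walk_dphi x (s1 ++ s2) = walk_dphi x s1 + walk_dphi (last x s1) s2.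
Proof. by elim: s1 x => [|y s1 IHs1] x /=; rewrite ?add0r // IHs1 addrA. Qed.

Lemma walk_dphi_shortcut x y s1 s2 s3 :
  walk_dphi x (s1 ++ y :: s2 ++ y :: s3)
  = walk_dphi x (s1 ++ y :: s3) + walk_dphi y (rcons s2 y).
Proof. by rewrite -cats1 !walk_dphi_cat /= walk_dphi_cat /=; lia. Qed.

Lemma walk_dphi_rcons x y s :
  walk_dphi x (rcons s y) = \sum_(xy <- zip (x :: s) (rcons s y)) dphi p o f g xy.1 xy.2.
Proof. by elim: s x => [|z s IHs] x /=; rewrite big_cons ?big_nil // IHs. Qed.

Lemma walk_dphi_cycle x s : is_cycle e (x :: s) -> walk_dphi x (rcons s x) = 0.
Proof.
move=> xs_cyc; rewrite walk_dphi_rcons -rot1_cons /dphi sumrB.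
rewrite -!(big_morph Posz PoszD (erefl _)) -/(phiC p o f _) -/(phiC p o g _).
by rewrite phiC_fg // subrr.
Qed.

Lemma simple_closed_walk_dphi x s :
  path e x (rcons s x) -> uniq (rcons s x) -> walk_dphi x (rcons s x) = 0.
Proof.
case: s => [|y [|z s]] walk_xs uniq_xs.
- by move: walk_xs; rewrite /= e_irr.
- by move: walk_xs => /= /andP[xy _]; rewrite addr0; apply: dphi_sym.
- by apply: walk_dphi_cycle; apply/and3P; split; rewrite // cons_uniq -rcons_uniq.
Qed.

(* A closed walk is a cycle, an edge walked back and forth, or splits at a repeated
   vertex into two shorter closed walks. *)
Lemma closed_walk_dphi x s : path e x s -> last x s = x -> walk_dphi x s = 0.
Proof.
have [n] := ubnP (size s); elim: n s x => // n IHn s x s_lt walk_s last_s.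
case: (boolP (uniq s)) => [s_uniq | /not_uniq_split[y [s1 [s2 [s3 s_def]]]]].
  move: walk_s last_s s_uniq; case/lastP: s {s_lt} => // s z.
  by rewrite last_rcons => + z_x; rewrite z_x; apply: simple_closed_walk_dphi.
move: walk_s last_s s_lt; rewrite s_def walk_dphi_shortcut cat_path /= -cat_rcons.
rewrite cat_path last_rcons !last_cat /= last_cat /= last_rcons !size_cat /= size_cat size_rcons.
case/and4P=> walk_s1 s1_y walk_s2 walk_s3 last_s s_lt.
have walk_s13 : path e x (s1 ++ y :: s3) by rewrite cat_path walk_s1 /= s1_y.
rewrite (IHn (rcons s2 y)) ?last_rcons ?size_rcons ?addr0; [|lia|by []|by []].
by apply: IHn; rewrite // ?last_cat // size_cat /=; lia.
Qed.

Lemma walk_dphi_eq x s1 s2 : path e x s1 -> path e x s2 -> last x s1 = last x s2 ->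
  walk_dphi x s1 = walk_dphi x s2.
Proof.
move=> walk_s1 walk_s2 last_eq; have /connectP[t walk_t t_x] := e_conn (last x s1) x.
have back s : path e x s -> last x s = last x s1 -> walk_dphi x s = - walk_dphi (last x s1) t.
  move=> walk_s last_s; apply/eqP; rewrite -subr_eq0 opprK -last_s -walk_dphi_cat.
  by rewrite closed_walk_dphi ?cat_path ?walk_s ?last_s ?last_cat ?last_s.
by rewrite !back.
Qed.

Lemma walk_to r v : exists s, path e r s && (last r s == v).
Proof. by have /connectP[s walk_s ->] := e_conn r v; exists s; rewrite walk_s eqxx. Qed.

Definition potential r v : int := walk_dphi r (xchoose (walk_to r v)).

Lemma potential_edge r u v : e u v -> potential r v - potential r u = dphi p o f g u v.
Proof.
move=> uv; rewrite /potential.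
case/andP: (xchooseP (walk_to r u)) => walk_u /eqP last_u.
case/andP: (xchooseP (walk_to r v)) => walk_v /eqP last_v.
rewrite (@walk_dphi_eq r _ (rcons (xchoose (walk_to r u)) v)) ?rcons_path ?last_u ?walk_u ?last_rcons //.
by rewrite -cats1 walk_dphi_cat last_u /=; lia.
Qed.

Lemma exists_potential : exists h, is_potential e p o f g h.
Proof.
case: (pickP (@predT V)) => [r _ | V0]; last by exists (fun=> 0) => u; have := V0 u.
by exists (potential r) => u v; apply: potential_edge.
Qed.

End Potential.

Section Descent.
Variables (V : finType) (e o : rel V) (p q : nat) (g : V -> nat).
Hypotheses (q_pos : 0 < q) (p_gt1 : 1 < p)
  (e_conn : forall u v, connect e u v)
  (o_edge : forall u v, e u v = o u v || o v u)
  (g_col : is_pq_col p q e g).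

Definition recolours_to_shift (F : V -> nat) : Prop :=
  exists (n : nat) (fs : nat -> V -> nat),
    [/\ fs 0 = F,
        (forall i, i < n -> is_pq_col p q e (fs i.+1) /\ vs_recolouring p q o (fs i) (fs i.+1)) &
        exists k : nat, forall v, fs n v = g v + k %[mod p]].

Lemma recolours_to_shift_phiC F c : (forall w, F w < p) -> recolours_to_shift F ->
  cycle e c -> phiC p o F c = phiC p o g c.
Proof.
move=> F_lt [n [fs [fs0 fs_step [k fs_shift]]]] c_cyc.
have fs_inv i : i <= n -> (forall w, fs i w < p) /\ phiC p o (fs i) c = phiC p o F c.
  elim: i => [|i IHi] i_lt; first by rewrite fs0.
  have [[fs_lt _] fs_rec] := fs_step i i_lt; have [fs_lt' <-] := IHi (ltnW i_lt).
  by split; last exact: (vs_recolouring_phiC o_edge q_pos fs_lt' fs_rec).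
have [fs_lt <-] := fs_inv n (leqnn n).
exact: phiC_shift g_col.1 fs_lt fs_shift.
Qed.

Lemma shift_constant_potential F h : (forall w, F w < p) -> is_potential e p o F g h ->
  (forall u v, h u = h v) -> exists k, forall v, F v = g v + k %[mod p].
Proof.
move=> F_lt h_pot h_const; case: (pickP (@predT V)) => [r _ | V0]; last first.
  by exists 0 => v; have := V0 v.
set k := F r + (p - g r); exists k.
have shift_closed : closed e [pred w | F w == g w + k %[mod p]].
  move=> x y xy; rewrite !inE.
  have phi_eq : phi_step p o F x y = phi_step p o g x y.
    by have := h_pot x y xy; rewrite /dphi (h_const y x); lia.
  rewrite -(eqn_modDl (phi_step p o F x y)) phi_step_addr // phi_eq addnA.
  by rewrite -modnDml phi_step_addr ?g_col.1 // modnDml.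
move=> v; apply/eqP; rewrite -[_ == _]/(v \in [pred w | F w == g w + k %[mod p]]).
rewrite -(closed_connect shift_closed (e_conn r v)) inE /k.
by rewrite addnA (_ : g r + F r + (p - g r) = F r + p) ?modnDr //; have := g_col.1 r; lia.
Qed.

Local Open Scope ring_scope.

Lemma potential_arc F h a b : is_potential e p o F g h -> o a b ->
  h b - h a = (phiA p F a b)%:Z - (phiA p g a b)%:Z.
Proof. by move=> h_pot ab; rewrite h_pot /dphi /phi_step ?ab // o_edge ab. Qed.

Section CutStep.
Variables (F : V -> nat) (h : V -> int) (K : int) (u v : V).
Hypotheses (F_col : is_pq_col p q e F) (h_pot : is_potential e p o F g h)
  (h_le : forall w, h w <= K) (huv : h u < h v).

Let X := [set w | h w <= h u].
Let F' w := if w \in X then ((F w + 1) %% p)%N else F w.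
Let h' w := h w + (w \in X)%:Z.

Let g_arc a b : o a b -> (q <= phiA p g a b <= p - q)%N.
Proof. by have [_] := (pq_colP p q o_edge g).1 g_col; apply. Qed.

Lemma cut_arc_out a b : o a b -> a \in X -> b \notin X -> (q + 1 <= phiA p F a b)%N.
Proof.
move=> ab; rewrite !inE => ha hb; have /andP := g_arc ab.
by have := potential_arc h_pot ab; lia.
Qed.

Lemma cut_arc_in a b : o a b -> a \notin X -> b \in X -> (phiA p F a b + q + 1 <= p)%N.
Proof.
move=> ab; rewrite !inE => ha hb; have /andP := g_arc ab.
by have := potential_arc h_pot ab; lia.
Qed.

Lemma cut_recolouring : vs_recolouring p q o F F'.
Proof.
exists X, 1%N; split; split=> //; first by apply/set0Pn; exists u; rewrite inE.
- apply/negP => /eqP X_T; have : v \in X by rewrite X_T inE.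
  by rewrite inE; lia.
- by lia.
- exact: cut_arc_out.
- exact: cut_arc_in.
Qed.

Lemma cut_potential : is_potential e p o F' g h'.
Proof.
move=> a b ab.
have := phi_step_recoloured o_edge q_pos F_col.1 cut_arc_out cut_arc_in (fun=> erefl) ab.
by have := h_pot ab; rewrite /dphi /h' /F'; case: (a \in X); case: (b \in X) => /=; lia.
Qed.

Lemma cut_le w : h' w <= K.
Proof.
by rewrite /h'; case: (boolP (w \in X)); rewrite inE => Xw; have := h_le v; have := h_le w; lia.
Qed.

Lemma cut_measure : (\sum_w `|K - h' w| < \sum_w `|K - h w|)%N.
Proof.
have u_X : u \in X by rewrite inE.
rewrite (bigD1 u) // [ltnRHS](bigD1 u) //= -addSn leq_add //.
  by rewrite /h' u_X; have := h_le v; lia.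
by apply: leq_sum => w _; have := cut_le w; rewrite /h'; lia.
Qed.

End CutStep.

Lemma bounded_potential_recolours K F h : is_pq_col p q e F -> is_potential e p o F g h ->
  (forall w, h w <= K) -> recolours_to_shift F.
Proof.
have [N] := ubnP (\sum_w `|K - h w|); elim: N F h => // N IHN F h meas_lt F_col h_pot h_le.
case: (pickP [pred uv : V * V | h uv.1 < h uv.2]) => [[u v] /= huv | h_flat].
  have F'_rec := cut_recolouring h_pot huv.
  have [n [fs [fs0 fs_step fs_shift]]] := IHN _ _ (leq_trans (cut_measure h_le huv) meas_lt)
    (vs_recolouring_col o_edge q_pos F_col F'_rec) (cut_potential F_col h_pot huv) (cut_le h_le huv).
  exists n.+1, (fun i => if i is j.+1 then fs j else F); split=> // -[_ | i /fs_step //].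
  by rewrite /= fs0; split=> //; apply: vs_recolouring_col F'_rec.
have h_const a b : h a = h b by have := h_flat (a, b); have := h_flat (b, a); rewrite /=; lia.
have [k F_shift] := shift_constant_potential F_col.1 h_pot h_const.
by exists 0%N, (fun=> F); split=> //; exists k.
Qed.

Lemma potential_recolours_to_shift F h : is_pq_col p q e F -> is_potential e p o F g h ->
  recolours_to_shift F.
Proof.
move=> F_col h_pot; apply: (bounded_potential_recolours (K := (\sum_w `|h w|)%:Z) F_col h_pot).
by move=> w; rewrite (bigD1 w) //= PoszD; lia.
Qed.

End Descent.

Theorem corollary2p5 (V : finType) (e o : rel V) (p q : nat)
  (hq : 0 < q) (hpq : 2 * q <= p)
  (e_sym : symmetric e) (e_irr : irreflexive e)
  (e_conn : forall u v, connect e u v)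
  (o_edge : forall u v, e u v = o u v || o v u)
  (o_anti : forall u v, ~~ (o u v && o v u))
  (f g : V -> nat) (hf : is_pq_col p q e f) (hg : is_pq_col p q e g) :
  (exists (n : nat) (fs : nat -> V -> nat),
      [/\ fs 0 = f,
          (forall i, i < n -> is_pq_col p q e (fs i.+1) /\
                              vs_recolouring p q o (fs i) (fs i.+1)) &
          exists k : nat, forall v, fs n v = g v + k %[mod p]])
  <->
  (forall c : seq V, is_cycle e c -> phiC p o f c = phiC p o g c).
Proof.
have p_gt1 : 1 < p by lia.
split=> [f_reach c /and3P[_ _ c_cyc] | phiC_fg].
  exact: (recolours_to_shift_phiC hq o_edge hg hf.1 f_reach c_cyc).
have [h h_pot] := exists_potential (ltnW p_gt1) e_irr e_conn o_edge o_anti phiC_fg.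
exact: (potential_recolours_to_shift hq p_gt1 e_conn o_edge hg hf h_pot).
Qed.
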